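(* Fix a finite alphabet $\mathcal{X}$, integers $M_1\ge M_2\ge1$, reals $\alpha,\beta>0$ and $\lambda_1,\lambda_2>0$; let $\xi_N=\lceil\alpha N\rceil$, $\chi_N=\lceil\beta N\rceil$. For each $N$ consider the one-step fixed-length test $\Phi_{\mathrm{FL},N}^{\mathrm{uk}}$ which observes $(\mathbf{X}^{\xi_N},\mathbf{Y}^{\chi_N})$, forms for each $(h,t)\in\mathcal{M}$ the events $\mathcal{B}_{h,t}^N=\{\mathrm{S}_t^h(\mathbf{X}^{\xi_N},\mathbf{Y}^{\chi_N})\le\lambda_1\}\cap\{\min_{\bar t\in[T_h],\bar t\ne t}\mathrm{S}_{\bar t}^h(\mathbf{X}^{\xi_N},\mathbf{Y}^{\chi_N})>\lambda_2\}$, and decides $\mathrm{H}_l^K$ if $\mathcal{B}_{K,l}^N\cap\bigcap_{(h,t)\in\mathcal{M},(h,t)\ne(K,l)}(\mathcal{B}_{h,t}^N)^c$ occurs for some $(K,l)\in\mathcal{M}$, and $\mathrm{H}_{\mathrm{r}}$ otherwise. Then: (i) for every $(P^{M_1},Q^{M_2})\in\mathcal{P}_0$, $\liminf_{N\to\infty}-\frac1N\log\eta(\Phi_{\mathrm{FL},N}^{\mathrm{uk}}|P^{M_1},Q^{M_2})\ge E_{\mathrm{r}}(\lambda_1,P^{M_1},Q^{M_2})$; (ii) for every $(K,l)\in\mathcal{M}$ and every $(P^{M_1},Q^{M_2})\in\mathcal{P}_l^K$, $\liminf_{N\to\infty}-\frac1N\log\bar\beta(\Phi_{\mathrm{FL},N}^{\mathrm{uk}}|P^{M_1},Q^{M_2})\ge\min\{G(\lambda_1,P^{M_1},Q^{M_2}),\lambda_2\}$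 and $\liminf_{N\to\infty}-\frac1N\log\zeta(\Phi_{\mathrm{FL},N}^{\mathrm{uk}}|P^{M_1},Q^{M_2})\ge\min\{\lambda_1,\lambda_2,G(\lambda_1,P^{M_1},Q^{M_2}),F(\lambda_2,P^{M_1},Q^{M_2})\}$.
   Context: Model: $\mathcal{P}(\mathcal{X})$ is the set of distributions on $\mathcal{X}$. For $i\in[M_1]$, $X_i^{\xi_N}=(X_{i,1},\dots,X_{i,\xi_N})$ i.i.d. $P_i$; for $j\in[M_2]$, $Y_j^{\chi_N}$ i.i.d. $Q_j$; all independent; within each database distributions are distinct. For $K\in[M_2]$, a $K$-match is a set of $K$ pairs in $[M_1]\times[M_2]$ with no two sharing a first or second coordinate; there are $T_K=\binom{M_1}{K}\binom{M_2}{K}K!$, enumerated $\mathcal{M}_1^K,\dots,\mathcal{M}_{T_K}^K$; $\mathcal{M}:=\{(h,t):h\in[M_2],t\in[T_h]\}$. Hypothesis $\mathrm{H}_l^K$: $(P^{M_1},Q^{M_2})\in\mathcal{P}_l^K:=\{\tilde P_i=\tilde Q_j\text{ iff }(i,j)\in\mathcal{M}_l^K\}$ (probability $\mathbb{P}_l^K$); null hypothesis $\mathrm{H}_{\mathrm{r}}$: $(P^{M_1},Q^{M_2})\in\mathcal{P}_0:=\{\tilde P_i\ne\tilde Q_j\ \forall i,j\}$ (probability $\mathbb{P}_{\mathrm{r}}$). Error probabilities of a test with decision $\phi$: under $\mathrm{H}_l^K$, mismatch $\bar\beta=\mathbb{P}_l^K\{\phi\notin\{\mathrm{H}_l^K,\mathrm{H}_{\mathrm{r}}\}\}$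 and false reject $\zeta=\mathbb{P}_l^K\{\phi=\mathrm{H}_{\mathrm{r}}\}$; under $\mathrm{H}_{\mathrm{r}}$, false alarm $\eta=\mathbb{P}_{\mathrm{r}}\{\phi\ne\mathrm{H}_{\mathrm{r}}\}$. Notation: $\hat T_{x^n}$ is the type of $x^n$; $D$ is KL divergence; $R_{\alpha,\beta}^{P,Q}=\frac{\alpha P+\beta Q}{\alpha+\beta}$; $\mathrm{GJS}(P,Q,\alpha,\beta)=\alpha D(P\|R_{\alpha,\beta}^{P,Q})+\beta D(Q\|R_{\alpha,\beta}^{P,Q})$; $\mathrm{G}_t^h(P^{M_1},Q^{M_2},\alpha,\beta)=\sum_{(i,j)\in\mathcal{M}_t^h}\mathrm{GJS}(P_i,Q_j,\alpha,\beta)$; $\mathrm{S}_t^h(\mathbf{x}^{\xi_N},\mathbf{y}^{\chi_N})=\mathrm{G}_t^h((\hat T_{x_i^{\xi_N}})_i,(\hat T_{y_j^{\chi_N}})_j,\alpha,\beta)$; $E(P^{M_1},Q^{M_2},\Omega^{M_1},\Psi^{M_2},\alpha,\beta)=\sum_i\alpha D(\Omega_i\|P_i)+\sum_j\beta D(\Psi_j\|Q_j)$. $E_{\mathrm{r}}(\lambda,P^{M_1},Q^{M_2})=\min_{(h,t)\in\mathcal{M}}\min_{(\Omega^{M_1},\Psi^{M_2})\in\mathcal{P}(\mathcal{X})^{M_1+M_2}:\mathrm{G}_t^h(\Omega^{M_1},\Psi^{M_2},\alpha,\beta)\le\lambda}E(\cdot)$. For $(P^{M_1},Q^{M_2})\in\mathcal{P}_l^K$: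 $G(\lambda,P^{M_1},Q^{M_2})=\min_{(h,t)\in\mathcal{M}:h>K}\min_{(\Omega^{M_1},\Psi^{M_2}):\mathrm{G}_t^h(\Omega^{M_1},\Psi^{M_2},\alpha,\beta)\le\lambda}E(P^{M_1},Q^{M_2},\Omega^{M_1},\Psi^{M_2},\alpha,\beta)$ (minimum over an empty set is $+\infty$), and $F(\lambda,P^{M_1},Q^{M_2})=\min_{(t_1,t_2)\in[T_K]^2,t_1\ne t_2}\min_{(\Omega^{M_1},\Psi^{M_2}):\mathrm{G}_{t_1}^K(\Omega^{M_1},\Psi^{M_2},\alpha,\beta)\le\lambda,\ \mathrm{G}_{t_2}^K(\Omega^{M_1},\Psi^{M_2},\alpha,\beta)\le\lambda}E(P^{M_1},Q^{M_2},\Omega^{M_1},\Psi^{M_2},\alpha,\beta)$. *)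

From HB Require Import structures.
From mathcomp Require Import all_boot all_order all_algebra.
From mathcomp Require Import all_classical all_reals all_analysis.
Set Implicit Arguments. Unset Strict Implicit. Unset Printing Implicit Defensive.
Import Order.TTheory GRing.Theory Num.Theory.
Local Open Scope ring_scope.

Definition is_dist (R : realType) (X : finType) (P : {ffun X -> R}) : Prop :=
  (forall a, 0 <= P a) /\ \sum_(a : X) P a = 1.

Definition KL (R : realType) (X : finType) (P Q : {ffun X -> R}) : \bar R :=
  if [exists a, (0 < P a) && (Q a == 0)] then +oo%E
  else (\sum_(a : X) (if P a == 0 then 0 else P a * ln (P a / Q a)))%:E.

Definition mixd (R : realType) (X : finType) (P Q : {ffun X -> R}) (alpha beta : R)
  : {ffun X -> R} := [ffun a => (alpha * P a + beta * Q a) / (alpha + beta)].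

Definition GJS (R : realType) (X : finType) (P Q : {ffun X -> R}) (alpha beta : R)
  : \bar R :=
  (alpha%:E * KL P (mixd P Q alpha beta) + beta%:E * KL Q (mixd P Q alpha beta))%E.

(** A K-match is a match of cardinality K. The set
    \mathcal{M} of all (h,t), h in [M2], is in bijection with the nonempty matches. *)
Definition is_match (M1 M2 : nat) (m : {set 'I_M1 * 'I_M2}) : bool :=
  [forall p in m, forall q in m, ((p.1 == q.1) || (p.2 == q.2)) ==> (p == q)].

Definition in_calM (M1 M2 : nat) (m : {set 'I_M1 * 'I_M2}) : bool :=
  is_match m && (0 < #|m|)%N.

Definition Gm (R : realType) (X : finType) (M1 M2 : nat) (m : {set 'I_M1 * 'I_M2})
  (P : 'I_M1 -> {ffun X -> R}) (Q : 'I_M2 -> {ffun X -> R}) (alpha beta : R) : \bar R :=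
  (\sum_(p in m) GJS (P p.1) (Q p.2) alpha beta)%E.

Definition Eexp (R : realType) (X : finType) (M1 M2 : nat)
  (P : 'I_M1 -> {ffun X -> R}) (Q : 'I_M2 -> {ffun X -> R})
  (Om : 'I_M1 -> {ffun X -> R}) (Ps : 'I_M2 -> {ffun X -> R}) (alpha beta : R)
  : \bar R :=
  (\sum_(i < M1) alpha%:E * KL (Om i) (P i) + \sum_(j < M2) beta%:E * KL (Ps j) (Q j))%E.

(** E_r(lambda, P, Q) (the minimum is written as an infimum; it is attained). *)
Definition Er (R : realType) (X : finType) (M1 M2 : nat) (alpha beta lambda : R)
  (P : 'I_M1 -> {ffun X -> R}) (Q : 'I_M2 -> {ffun X -> R}) : \bar R :=
  ereal_inf [set e | exists (m : {set 'I_M1 * 'I_M2}) Om Ps,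
     [/\ in_calM m, (forall i, is_dist (Om i)), (forall j, is_dist (Ps j)),
         (Gm m Om Ps alpha beta <= lambda%:E)%E & e = Eexp P Q Om Ps alpha beta]].

(** G(lambda, P, Q) for (P,Q) in P_l^K with K = #|m0|; inf of the empty set is +oo. *)
Definition Gfun (R : realType) (X : finType) (M1 M2 : nat) (alpha beta lambda : R)
  (K : nat) (P : 'I_M1 -> {ffun X -> R}) (Q : 'I_M2 -> {ffun X -> R}) : \bar R :=
  ereal_inf [set e | exists (m : {set 'I_M1 * 'I_M2}) Om Ps,
     [/\ in_calM m && (K < #|m|)%N, (forall i, is_dist (Om i)), (forall j, is_dist (Ps j)),
         (Gm m Om Ps alpha beta <= lambda%:E)%E & e = Eexp P Q Om Ps alpha beta]].

Definition Ffun (R : realType) (X : finType) (M1 M2 : nat) (alpha beta lambda : R)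
  (K : nat) (P : 'I_M1 -> {ffun X -> R}) (Q : 'I_M2 -> {ffun X -> R}) : \bar R :=
  ereal_inf [set e | exists (m1 m2 : {set 'I_M1 * 'I_M2}) Om Ps,
     [/\ [&& is_match m1, is_match m2, #|m1| == K, #|m2| == K & m1 != m2],
         (forall i, is_dist (Om i)) /\ (forall j, is_dist (Ps j)),
         (Gm m1 Om Ps alpha beta <= lambda%:E)%E /\ (Gm m2 Om Ps alpha beta <= lambda%:E)%E
       & e = Eexp P Q Om Ps alpha beta]].

Definition sampleX (X : finType) (M1 n1 : nat) := {ffun 'I_M1 -> {ffun 'I_n1 -> X}}.
Definition sampleY (X : finType) (M2 n2 : nat) := {ffun 'I_M2 -> {ffun 'I_n2 -> X}}.

Definition etype (R : realType) (X : finType) (n : nat) (x : {ffun 'I_n -> X})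
  : {ffun X -> R} := [ffun a => #|[set k | x k == a]|%:R / n%:R].

Definition Sstat (R : realType) (X : finType) (M1 M2 n1 n2 : nat) (alpha beta : R)
  (m : {set 'I_M1 * 'I_M2}) (x : sampleX X M1 n1) (y : sampleY X M2 n2) : \bar R :=
  Gm m (fun i => etype R (x i)) (fun j => etype R (y j)) alpha beta.

Definition Bev (R : realType) (X : finType) (M1 M2 n1 n2 : nat) (alpha beta l1 l2 : R)
  (m : {set 'I_M1 * 'I_M2}) (x : sampleX X M1 n1) (y : sampleY X M2 n2) : Prop :=
  (Sstat alpha beta m x y <= l1%:E)%E /\
  (forall m' : {set 'I_M1 * 'I_M2}, is_match m' -> #|m'| = #|m| -> m' <> m ->
      (l2%:E < Sstat alpha beta m' x y)%E).

Definition decides (R : realType) (X : finType) (M1 M2 n1 n2 : nat) (alpha beta l1 l2 : R)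
  (m : {set 'I_M1 * 'I_M2}) (x : sampleX X M1 n1) (y : sampleY X M2 n2) : Prop :=
  Bev alpha beta l1 l2 m x y /\
  (forall m' : {set 'I_M1 * 'I_M2}, in_calM m' -> m' <> m -> ~ Bev alpha beta l1 l2 m' x y).

Definition sprob (R : realType) (X : finType) (M1 M2 n1 n2 : nat)
  (P : 'I_M1 -> {ffun X -> R}) (Q : 'I_M2 -> {ffun X -> R})
  (A : sampleX X M1 n1 -> sampleY X M2 n2 -> Prop) : R :=
  \sum_(x : sampleX X M1 n1) \sum_(y : sampleY X M2 n2)
     (if `[< A x y >] then
        (\prod_(i < M1) \prod_(k < n1) P i (x i k)) *
        (\prod_(j < M2) \prod_(k < n2) Q j (y j k))
      else 0).

Definition ceiln (R : realType) (a : R) (N : nat) : nat := `|Num.ceil (a * N%:R)|%N.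

Definition expo (R : realType) (p : R) (N : nat) : \bar R :=
  if p == 0 then +oo%E else ((- ln p) / N%:R)%:E.

Definition eta_err (R : realType) (X : finType) (M1 M2 : nat) (alpha beta l1 l2 : R)
  (P : 'I_M1 -> {ffun X -> R}) (Q : 'I_M2 -> {ffun X -> R}) (N : nat) : R :=
  sprob (n1 := ceiln alpha N) (n2 := ceiln beta N) P Q
    (fun x y => exists m, in_calM m /\ decides alpha beta l1 l2 m x y).

Definition beta_err (R : realType) (X : finType) (M1 M2 : nat) (alpha beta l1 l2 : R)
  (m0 : {set 'I_M1 * 'I_M2})
  (P : 'I_M1 -> {ffun X -> R}) (Q : 'I_M2 -> {ffun X -> R}) (N : nat) : R :=
  sprob (n1 := ceiln alpha N) (n2 := ceiln beta N) P Q
    (fun x y => exists m, [/\ in_calM m, m <> m0 & decides alpha beta l1 l2 m x y]).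

Definition zeta_err (R : realType) (X : finType) (M1 M2 : nat) (alpha beta l1 l2 : R)
  (P : 'I_M1 -> {ffun X -> R}) (Q : 'I_M2 -> {ffun X -> R}) (N : nat) : R :=
  sprob (n1 := ceiln alpha N) (n2 := ceiln beta N) P Q
    (fun x y => ~ exists m, in_calM m /\ decides alpha beta l1 l2 m x y).

Definition in_P0 (R : realType) (X : finType) (M1 M2 : nat)
  (P : 'I_M1 -> {ffun X -> R}) (Q : 'I_M2 -> {ffun X -> R}) : Prop :=
  forall i j, P i <> Q j.

Definition in_Pm (R : realType) (X : finType) (M1 M2 : nat) (m : {set 'I_M1 * 'I_M2})
  (P : 'I_M1 -> {ffun X -> R}) (Q : 'I_M2 -> {ffun X -> R}) : Prop :=
  forall i j, P i = Q j <-> (i, j) \in m.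

Definition valid_model (R : realType) (X : finType) (M1 M2 : nat)
  (P : 'I_M1 -> {ffun X -> R}) (Q : 'I_M2 -> {ffun X -> R}) : Prop :=
  [/\ (forall i, is_dist (P i)), (forall j, is_dist (Q j)),
      injective P & injective Q].

From HB Require Import structures.
From mathcomp Require Import all_boot all_order all_algebra.
From mathcomp Require Import all_classical all_reals all_analysis.
From mathcomp Require Import lra ring.
Import Order.TTheory GRing.Theory Num.Theory.
Set Implicit Arguments. Unset Strict Implicit. Unset Printing Implicit Defensive.
Local Open Scope ring_scope.

(* Method of types.  Relative to the probability of its own type class, a sample
   whose empirical types are (Om, Ps) has probability at most exp(-N E(P,Q,Om,Ps)),
   and there are only polynomially many type classes; hence an event all of whose
   samples satisfy E(P,Q,Om,Ps) >= t has error exponent at least t.  It remains to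
   see that every error event forces the empirical types into one of the sets
   defining the exponents: a false alarm needs some S_t^h <= lambda_1; a mismatch
   or a false reject either accepts a match larger than the true one (G), or is
   caused by a statistic above lambda_2 on a sub-match of the true match, by the
   true statistic exceeding lambda_1 or lambda_2, or by another K-match tying with
   the true one below lambda_2 (F).  On sub-matches of the true match the
   statistic is bounded by E through the compensation identity for GJS. *)

Section Divergence.
Variables (R : realType) (X : finType).
Implicit Types (T P A B : {ffun X -> R}) (al be : R).

Definition klterm T P (a : X) : R := if T a == 0 then 0 else T a * ln (T a / P a).

Definition abscont T P : bool := [forall a, (0 < T a) ==> (0 < P a)].

Lemma abscontP T P : reflect (forall a, 0 < T a -> 0 < P a) (abscont T P).
Proof. by apply: (iffP forallP) => h a; [apply/implyP: (h a) | apply/implyP/h]. Qed.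

Lemma KL_abscont T P : abscont T P -> KL T P = (\sum_a klterm T P a)%:E.
Proof.
move=> /abscontP TP; rewrite /KL ifF //; apply/existsP => -[a /andP[/TP]].
by move=> /gt_eqF ->.
Qed.

Lemma KL_Nabscont T P : (forall a, 0 <= P a) -> ~~ abscont T P -> KL T P = +oo%E.
Proof.
move=> P0 nTP; rewrite /KL ifT //.
apply: contraNT nTP => /existsPn h; apply/abscontP => a Ta.
by move: (h a); rewrite Ta /= lt_def => ->; exact: P0.
Qed.

Lemma ln_le_sub1 (x : R) : 0 < x -> ln x <= x - 1.
Proof. by move=> x0; have := @le_ln1Dx R (x - 1); rewrite [1 + _]addrC subrK; apply; lra. Qed.

Lemma klterm_lnE T P a : 0 <= T a -> (0 < T a -> 0 < P a) ->
  klterm T P a = T a * (ln (T a) - ln (P a)).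
Proof.
move=> T0 TP; rewrite /klterm; have [->|Tn0] := eqVneq (T a) 0; first by rewrite mul0r.
have Tp : 0 < T a by rewrite lt_def Tn0.
by rewrite ln_div ?posrE // TP.
Qed.

Lemma klterm_ge T P a : 0 <= T a -> 0 <= P a -> (0 < T a -> 0 < P a) ->
  T a - P a <= klterm T P a.
Proof.
move=> T0 P0 TP; have [T0eq|Tn0] := eqVneq (T a) 0.
  by rewrite /klterm T0eq eqxx sub0r oppr_le0.
have Tp : 0 < T a by rewrite lt_def Tn0.
have Pp := TP Tp.
have := ln_le_sub1 (divr_gt0 Pp Tp).
rewrite -[P a / T a]invf_div lnV ?posrE ?divr_gt0 // => h.
have : T a * (1 - P a / T a) <= T a * ln (T a / P a) by rewrite ler_pM2l //; lra.
by rewrite /klterm (negbTE Tn0) mulrBr mulr1 mulrCA divff ?mulr1.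
Qed.

Lemma gibbs T P : is_dist T -> is_dist P -> abscont T P ->
  0 <= \sum_a klterm T P a.
Proof.
move=> [T0 T1] [P0 P1] /abscontP TP.
apply: le_trans (ler_sum _ (fun a _ => klterm_ge (T0 a) (P0 a) (@TP a))).
by rewrite sumrB T1 P1 subrr.
Qed.

Lemma KL_ge0 T P : is_dist T -> is_dist P -> (0 <= KL T P)%E.
Proof.
move=> dT dP; have [TP|nTP] := boolP (abscont T P).
  by rewrite KL_abscont // lee_fin gibbs.
by rewrite KL_Nabscont //; case: dP.
Qed.

Section Mixture.
Variables (al be : R) (A B : {ffun X -> R}).
Hypotheses (al0 : 0 < al) (be0 : 0 < be) (dA : is_dist A) (dB : is_dist B).

Let Rm := mixd A B al be.

Lemma mixdE a : (al + be) * Rm a = al * A a + be * B a.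
Proof. by rewrite /Rm /mixd ffunE mulrCA divff ?mulr1 // gt_eqF // addr_gt0. Qed.

Lemma mixd_gt0 a : (0 < Rm a) = (0 < A a) || (0 < B a).
Proof.
have [[A0 _] [B0 _]] := (dA, dB).
rewrite -(pmulr_rgt0 _ (addr_gt0 al0 be0)) mixdE.
have [Ap|] := ltP 0 (A a).
  by rewrite orTb; apply: (lt_le_trans (mulr_gt0 al0 Ap)); rewrite lerDl mulr_ge0 // ltW.
move=> Ale; have -> : A a = 0 by apply/eqP; rewrite eq_le Ale A0.
by rewrite orFb mulr0 add0r pmulr_rgt0.
Qed.

Lemma mixd_dist : is_dist Rm.
Proof.
have [[A0 A1] [B0 B1]] := (dA, dB); split.
  move=> a; rewrite /Rm /mixd ffunE divr_ge0 ?addr_ge0 ?mulr_ge0 // ltW //.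
rewrite /Rm /mixd; under eq_bigr do rewrite ffunE.
rewrite -mulr_suml big_split /= -!mulr_sumr A1 B1 !mulr1 divff //.
by rewrite gt_eqF // addr_gt0.
Qed.

(* Compensation identity: al D(A||P) + be D(B||P) = GJS(A,B) + (al+be) D(Rm||P). *)
Lemma GJS_le_KL P : is_dist P ->
  (GJS A B al be <= al%:E * KL A P + be%:E * KL B P)%E.
Proof.
move=> dP; have [P0 _] := dP.
have KLge0 T : is_dist T -> forall c, 0 < c -> (0 <= c%:E * KL T P)%E.
  by move=> dT c c0; rewrite mule_ge0 ?KL_ge0 // lee_fin ltW.
have [AP|nAP] := boolP (abscont A P); last first.
  rewrite KL_Nabscont // gt0_muley ?lte_fin // addye ?leey //.
  by rewrite gt_eqF // (lt_le_trans _ (KLge0 _ dB _ be0)) ?ltNy0.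
have [BP|nBP] := boolP (abscont B P); last first.
  rewrite (KL_Nabscont P0 nBP) gt0_muley ?lte_fin // addey ?leey //.
  by rewrite gt_eqF // (lt_le_trans _ (KLge0 _ dA _ al0)) ?ltNy0.
have [[A0 _] [B0 _]] := (dA, dB); have [R0 _] := mixd_dist.
move: (AP) (BP) => /abscontP AP' /abscontP BP'.
have AR a : 0 < A a -> 0 < Rm a by rewrite mixd_gt0 => ->.
have BR a : 0 < B a -> 0 < Rm a by rewrite mixd_gt0 orbC => ->.
have RP a : 0 < Rm a -> 0 < P a by rewrite mixd_gt0 => /orP[/AP'|/BP'].
rewrite /GJS -/Rm !KL_abscont; try exact/abscontP.
rewrite -!EFinM -!EFinD lee_fin !mulr_sumr -!big_split /=.
rewrite -subr_ge0 -sumrB.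
have := mulr_ge0 (ltW (addr_gt0 al0 be0)) (gibbs mixd_dist dP (introT (abscontP _ _) RP)).
rewrite mulr_sumr; congr (0 <= _); apply: eq_bigr => a _.
rewrite !klterm_lnE //; try by [apply: AR | apply: BR | apply: RP | apply: AP' | apply: BP'].
by rewrite mulrA mixdE; ring.
Qed.

End Mixture.

End Divergence.

Section Types.
Variables (R : realType) (X : finType) (n : nat).
Implicit Types (x s : {ffun 'I_n -> X}) (P : {ffun X -> R}).

Definition occ x (a : X) : nat := #|[set k | x k == a]|.

Lemma etypeE x a : etype R x a = (occ x a)%:R / n%:R.
Proof. by rewrite ffunE. Qed.

Lemma occ_le x a : (occ x a <= n)%N.
Proof. by rewrite /occ (leq_trans (max_card _)) ?card_ord. Qed.

Lemma sum_occ x (g : X -> R) : \sum_(k < n) g (x k) = \sum_a (occ x a)%:R * g a.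
Proof.
rewrite (partition_big x predT) //=; apply: eq_bigr => a _.
rewrite (eq_bigr (fun _ => g a)); last by move=> k /eqP ->.
by rewrite sumr_const /occ cardsE mulr_natl.
Qed.

Lemma etype_gt0 x k : 0 < etype R x (x k).
Proof.
rewrite etypeE divr_gt0 ?ltr0n ?(leq_ltn_trans _ (ltn_ord k)) //.
by apply/card_gt0P; exists k; rewrite inE.
Qed.

Lemma prod_Nabscont x P : (forall a, 0 <= P a) -> ~~ abscont (etype R x) P ->
  \prod_(k < n) P (x k) = 0.
Proof.
move=> P0; rewrite negb_forall => /existsP[a]; rewrite negb_imply -leNgt => /andP[Ta Pa].
have : (occ x a)%:R != 0 :> R by apply: contraTneq Ta; rewrite etypeE => ->; rewrite mul0r ltxx.
rewrite pnatr_eq0 -lt0n => /card_gt0P[k]; rewrite inE => /eqP xk.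
by apply/eqP/prodf_eq0; exists k => //; rewrite xk eq_le Pa P0.
Qed.

Hypothesis n_gt0 : (0 < n)%N.

Lemma etype_dist x : is_dist (etype R x).
Proof.
have n0 : n%:R != 0 :> R by rewrite pnatr_eq0 -lt0n.
split=> [a|]; first by rewrite etypeE divr_ge0.
have := sum_occ x (fun _ => 1); rewrite sumr_const card_ord => nE.
under eq_bigr do rewrite etypeE.
rewrite -mulr_suml (eq_bigr (fun a => (occ x a)%:R * 1)) => [|a _]; last by rewrite mulr1.
by rewrite -nE divff.
Qed.

Lemma prod_abscont x P : abscont (etype R x) P ->
  \prod_(k < n) P (x k) =
  \prod_(k < n) etype R x (x k) * expR (- (n%:R * \sum_a klterm (etype R x) P a)).
Proof.
move=> /abscontP TP; set T := etype R x.
have T0 a : 0 <= T a by rewrite etypeE divr_ge0.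
pose g a := ln (P a) - ln (T a).
have Pg k : P (x k) = T (x k) * expR (g (x k)).
  have Tp := etype_gt0 x k; have Pp := TP _ Tp.
  by rewrite /g expRB !lnK ?posrE // mulrCA divff ?mulr1 // gt_eqF.
rewrite (eq_bigr _ (fun k _ => Pg k)) big_split /= -expR_sum sum_occ mulr_sumr -sumrN.
congr (_ * expR _); apply: eq_bigr => a _.
rewrite klterm_lnE //; last exact: TP.
have nT : n%:R * T a = (occ x a)%:R.
  by rewrite /T etypeE mulrCA divff ?mulr1 // pnatr_eq0 -lt0n.
by rewrite mulrA nT /g; ring.
Qed.

Definition occv x : {ffun X -> 'I_n.+1} := [ffun a => inord (occ x a)].

Lemma occv_etype x s : occv x = occv s -> etype R x = etype R s.
Proof.
move=> e; apply/ffunP => a; rewrite !etypeE.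
have /(congr1 val) := congr1 (fun f : {ffun X -> 'I_n.+1} => f a) e.
by rewrite !ffunE /= !inordK ?ltnS ?occ_le // => ->.
Qed.

(* Sequences of a fixed type T carry total T^n-mass at most 1, and there are at
   most (n+1)^|X| types. *)
Lemma sum_prod_etype_le :
  \sum_(s : {ffun 'I_n -> X}) \prod_(k < n) etype R s (s k) <= (n.+1 ^ #|X|)%:R.
Proof.
have -> : ((n.+1 ^ #|X|)%:R : R) = \sum_(c : {ffun X -> 'I_n.+1}) 1.
  by rewrite sumr_const card_ffun card_ord.
rewrite (partition_big occv predT) //=; apply: ler_sum => c _.
have [s0 /eqP s0c|none] := pickP (fun s => occv s == c); last first.
  by rewrite big_pred0 // => s; rewrite none.
have [T0 T1] := etype_dist s0.
rewrite (eq_bigr (fun s => \prod_(k < n) etype R s0 (s k))); last first.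
  by move=> s /eqP sc; rewrite (occv_etype (x := s) (s := s0)) // sc.
apply: le_trans (_ : \sum_(s : {ffun 'I_n -> X}) \prod_(k < n) etype R s0 (s k) <= _).
  rewrite [X in _ <= X](bigID (fun s => occv s == c)) /= lerDl.
  by apply: sumr_ge0 => s _; apply: prodr_ge0.
by rewrite -(bigA_distr_bigA (fun (k : 'I_n) (a : X) => etype R s0 a)) /= T1 prodr_const expr1n.
Qed.

End Types.

Definition etypes (R : realType) (X : finType) (M n : nat)
  (x : {ffun 'I_M -> {ffun 'I_n -> X}}) : 'I_M -> {ffun X -> R} :=
  fun i => etype R (x i).

Section Databases.
Variables (R : realType) (X : finType) (M n : nat).
Variable P : 'I_M -> {ffun X -> R}.
Hypotheses (dP : forall i, is_dist (P i)) (n_gt0 : (0 < n)%N).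
Implicit Types x : {ffun 'I_M -> {ffun 'I_n -> X}}.

Definition db_prob x : R := \prod_(i < M) \prod_(k < n) P i (x i k).

Definition db_tprob x : R := \prod_(i < M) \prod_(k < n) etypes R x i (x i k).

Definition db_div x : R := \sum_(i < M) \sum_a klterm (etypes R x i) (P i) a.

Lemma db_tprob_ge0 x : 0 <= db_tprob x.
Proof. by apply: prodr_ge0 => i _; apply: prodr_ge0 => k _; exact/ltW/etype_gt0. Qed.

Lemma db_prob_Nabscont x : ~~ [forall i, abscont (etypes R x i) (P i)] -> db_prob x = 0.
Proof.
rewrite negb_forall => /existsP[i nTP]; apply/eqP/prodf_eq0; exists i => //.
by rewrite prod_Nabscont //; case: (dP i).
Qed.

Lemma db_prob_abscont x : [forall i, abscont (etypes R x i) (P i)] ->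
  db_prob x = db_tprob x * expR (- (n%:R * db_div x)).
Proof.
move=> /forallP TP; rewrite /db_prob (eq_bigr _ (fun i _ => prod_abscont n_gt0 (TP i))).
by rewrite big_split /= -expR_sum mulr_sumr -sumrN.
Qed.

Lemma db_div_ge0 x : [forall i, abscont (etypes R x i) (P i)] -> 0 <= db_div x.
Proof.
move=> /forallP TP; apply: sumr_ge0 => i _.
exact: gibbs (etype_dist R n_gt0 (x i)) (dP i) (TP i).
Qed.

Lemma sum_KL_etypes (a : R) x : [forall i, abscont (etypes R x i) (P i)] ->
  (\sum_(i < M) a%:E * KL (etypes R x i) (P i))%E = (a * db_div x)%:E.
Proof.
move=> /forallP TP; rewrite /db_div mulr_sumr -sumEFin.
by apply: eq_bigr => i _; rewrite KL_abscont // EFinM.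
Qed.

Lemma sum_db_tprob_le : \sum_x db_tprob x <= ((n.+1 ^ #|X|) ^ M)%:R.
Proof.
rewrite /db_tprob.
rewrite -(bigA_distr_bigA (fun i (s : {ffun 'I_n -> X}) => \prod_(k < n) etype R s (s k))) /=.
rewrite natrX -[M in _ ^+ M]card_ord -prodr_const.
apply: ler_prod => i _; rewrite sumr_ge0 ?sum_prod_etype_le //= => s _.
by apply: prodr_ge0 => k _; exact/ltW/etype_gt0.
Qed.

End Databases.

Section SampleProbability.
Variables (R : realType) (X : finType) (M1 M2 n1 n2 : nat).
Variables (P : 'I_M1 -> {ffun X -> R}) (Q : 'I_M2 -> {ffun X -> R}).
Hypotheses (dP : forall i, is_dist (P i)) (dQ : forall j, is_dist (Q j)).
Hypotheses (n1_gt0 : (0 < n1)%N) (n2_gt0 : (0 < n2)%N).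
Variables (al be : R) (N : nat).
Hypotheses (n1_ge : al * N%:R <= n1%:R) (n2_ge : be * N%:R <= n2%:R).

Lemma sample_prob_le (c : R) (x : sampleX X M1 n1) (y : sampleY X M2 n2) :
  (c%:E <= Eexp P Q (etypes R x) (etypes R y) al be)%E ->
  db_prob P x * db_prob Q y <= db_tprob R x * db_tprob R y * expR (- (N%:R * c)).
Proof.
move=> cE; have E0 := ltW (expR_gt0 (- (N%:R * c))).
have tp0 := mulr_ge0 (db_tprob_ge0 R x) (db_tprob_ge0 R y).
have [TP|/(db_prob_Nabscont dP) ->] := boolP [forall i, abscont (etypes R x i) (P i)];
  last by rewrite mul0r mulr_ge0.
have [TQ|/(db_prob_Nabscont dQ) ->] := boolP [forall j, abscont (etypes R y j) (Q j)];
  last by rewrite mulr0 mulr_ge0.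
move: cE; rewrite /Eexp (sum_KL_etypes _ TP) (sum_KL_etypes _ TQ) -EFinD lee_fin => cE.
rewrite (db_prob_abscont n1_gt0 TP) (db_prob_abscont n2_gt0 TQ) mulrACA -expRD.
rewrite ler_wpM2l // ler_expR -opprD lerN2.
have D1 := db_div_ge0 dP n1_gt0 TP; have D2 := db_div_ge0 dQ n2_gt0 TQ.
apply: (le_trans (ler_wpM2l (ler0n _ N) cE)); rewrite mulrDr !mulrA.
by apply: lerD; apply: ler_wpM2r => //; rewrite mulrC.
Qed.

Lemma sprob_ge0 (A : sampleX X M1 n1 -> sampleY X M2 n2 -> Prop) : 0 <= sprob P Q A.
Proof.
apply: sumr_ge0 => x _; apply: sumr_ge0 => y _; case: asboolP => // _.
by apply: mulr_ge0; apply: prodr_ge0 => i _; apply: prodr_ge0 => k _; [case: (dP i) | case: (dQ i)].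
Qed.

Lemma sprob_le (c : R) (A : sampleX X M1 n1 -> sampleY X M2 n2 -> Prop) :
  (forall x y, A x y -> (c%:E <= Eexp P Q (etypes R x) (etypes R y) al be)%E) ->
  sprob P Q A <= ((n1.+1 ^ #|X|) ^ M1 * (n2.+1 ^ #|X|) ^ M2)%:R * expR (- (N%:R * c)).
Proof.
move=> HA; rewrite natrM.
apply: (@le_trans _ _ (\sum_(x : sampleX X M1 n1) \sum_(y : sampleY X M2 n2)
                         db_tprob R x * db_tprob R y * expR (- (N%:R * c)))).
  apply: ler_sum => x _; apply: ler_sum => y _; case: asboolP => [/HA/sample_prob_le //|_].
  by rewrite mulr_ge0 ?mulr_ge0 ?db_tprob_ge0 ?(ltW (expR_gt0 _)).
under eq_bigr do rewrite -mulr_suml.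
rewrite -mulr_suml ler_wpM2r ?(ltW (expR_gt0 _)) //.
under eq_bigr do rewrite -mulr_sumr.
rewrite -mulr_suml ler_pM ?sumr_ge0 ?sum_db_tprob_le // => *; exact: db_tprob_ge0.
Qed.

End SampleProbability.

Section Asymptotics.
Variable R : realType.
Local Open Scope classical_set_scope.
Local Open Scope ereal_scope.

Lemma lee_fin_below (t s : \bar R) : (forall c : R, c%:E <= t -> c%:E <= s) -> t <= s.
Proof.
case: t => [r h | h | _]; [exact: h | | exact: leNye].
case: s h => [r | | ] h //; last by have := h 0%R (leey _).
by have := h (r + 1)%R (leey _); rewrite lee_fin => h1; exfalso; lra.
Qed.

Lemma limn_einf_ge_near (u : (\bar R)^nat) (c : R) :
  (forall e, (0 < e)%R -> \forall N \near \oo, (c - e)%:E <= u N) ->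
  c%:E <= limn_einf u.
Proof.
move=> h; apply/lee_subgt0Pr => e e0; rewrite limn_einf_lim.
apply: lime_ge; first exact: is_cvg_einfs.
have [N0 _ hN0] := h e e0; near=> N; apply/ereal_infP => _ [k /= Nk <-].
by rewrite -EFinB; apply: hN0; apply: leq_trans Nk; near: N; exists N0.
Unshelve. all: by end_near. Qed.

Local Close Scope ereal_scope.

Lemma ln_sqr_le (y : R) : 1 <= y -> ln y ^+ 2 <= 2 * y.
Proof.
move=> y1; have := expR_ge1Dxn 1 (ln_ge0 y1).
by rewrite lnK ?posrE ?(lt_le_trans ltr01) // (_ : (1 + 1)`!%:R = 2 :> R) //; nra.
Qed.

Lemma ln_div_near (g e : R) : 1 <= g -> 0 < e ->
  \forall N \near \oo, ln (g * N%:R) / N%:R <= e.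
Proof.
move=> g1 e0; near=> N.
have N1 : 1 <= N%:R :> R by near: N; exists 1%N => // n; rewrite /= ler1n.
have : 2 * g / e ^+ 2 <= N%:R.
  near: N; exists (Num.truncn (2 * g / e ^+ 2)).+1 => // n /= hn.
  by apply/ltW/(lt_le_trans (truncnS_gt _)); rewrite ler_nat.
rewrite ler_pdivrMr ?exprn_gt0 // => Nlarge.
have y1 : 1 <= g * N%:R by nra.
rewrite ler_pdivrMr ?(lt_le_trans ltr01) // -ler_sqr ?nnegrE ?ln_ge0 //; last by nra.
by apply: le_trans (ln_sqr_le y1) _; nra.
Unshelve. all: by end_near. Qed.

End Asymptotics.

Section ErrorExponent.
Variable R : realType.

Lemma ceiln_bounds (a : R) (N : nat) : 0 < a -> (0 < N)%N ->
  [/\ (0 < ceiln a N)%N, a * N%:R <= (ceiln a N)%:R & (ceiln a N)%:R <= a * N%:R + 1].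
Proof.
move=> a0 N0; have aN : 0 < a * N%:R by rewrite mulr_gt0 ?ltr0n.
have cE : (ceiln a N)%:R = (Num.ceil (a * N%:R))%:~R :> R.
  by rewrite /ceiln natr_absz ger0_norm // ceil_ge0 (lt_trans _ aN) ?ltrN10.
have aNc : a * N%:R <= (ceiln a N)%:R by rewrite cE ceil_ge.
split=> //; first by rewrite -(ltr0n R) (lt_le_trans aN).
have /andP[+ _] := ceil_itv (a * N%:R).
by rewrite intrD -cE => /ltW; rewrite lerBlDr.
Qed.

Lemma expo_ge (p C c : R) (N : nat) : 0 <= p -> 1 <= C -> (0 < N)%N ->
  p <= C * expR (- (N%:R * c)) -> ((c - ln C / N%:R)%:E <= expo p N)%E.
Proof.
move=> p0 C1 N0 hp; rewrite /expo; have [_|pn0] := eqVneq p 0; first exact: leey.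
have pp : 0 < p by rewrite lt_def pn0.
have Cp : 0 < C by apply: lt_le_trans C1.
have Np : 0 < N%:R :> R by rewrite ltr0n.
have : ln p <= ln C - N%:R * c.
  by rewrite -(expRK (- (N%:R * c))) -lnM ?posrE ?expR_gt0 // ler_ln ?posrE ?mulr_gt0 ?expR_gt0.
by rewrite lee_fin ler_pdivlMr // mulrBl divfK ?gt_eqF //; lra.
Qed.

Variables (X : finType) (M1 M2 : nat) (al be : R).
Hypotheses (al0 : 0 < al) (be0 : 0 < be).

Lemma ln_card_types_le (N : nat) : (0 < N)%N ->
  ln (((ceiln al N).+1 ^ #|X|) ^ M1 * ((ceiln be N).+1 ^ #|X|) ^ M2)%:R
    <= (#|X| * (M1 + M2))%:R * ln ((al + be + 2) * N%:R).
Proof.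
move=> N0; have N1 : 1 <= N%:R :> R by rewrite ler1n.
have types_le a : 0 < a -> a <= al + be ->
    ((ceiln a N).+1%:R : R) <= (al + be + 2) * N%:R.
  move=> a0 ale; have [_ _ hc] := ceiln_bounds a0 N0.
  by rewrite -addn1 natrD; nra.
have gN : 0 < (al + be + 2) * N%:R by rewrite mulr_gt0 ?ltr0n // !addr_gt0.
rewrite mulr_natl -lnXn // ler_ln ?posrE ?ltr0n ?muln_gt0 ?expn_gt0 ?exprn_gt0 //.
rewrite natrM !natrX -!exprM mulnDr exprD.
apply: ler_pM; rewrite ?exprn_ge0 // lerXn2r ?nnegrE ?ler0n ?(ltW gN) ?types_le //.
  by rewrite lerDl ltW.
by rewrite lerDr ltW.
Qed.

Variables (P : 'I_M1 -> {ffun X -> R}) (Q : 'I_M2 -> {ffun X -> R}).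
Hypotheses (dP : forall i, is_dist (P i)) (dQ : forall j, is_dist (Q j)).

Lemma sprob_exponent_ge (t : \bar R)
    (A : forall N, sampleX X M1 (ceiln al N) -> sampleY X M2 (ceiln be N) -> Prop) :
  (forall N, (0 < N)%N -> forall x y, A N x y ->
     (t <= Eexp P Q (etypes R x) (etypes R y) al be)%E) ->
  (t <= limn_einf (fun N => expo (sprob P Q (A N)) N))%E.
Proof.
move=> tE; apply: lee_fin_below => c ct; apply: limn_einf_ge_near => e e0.
set K := (#|X| * (M1 + M2))%N.
have K1 : 0 < K%:R + 1 :> R by rewrite ltr_wpDl ?ler0n.
have g1 : 1 <= al + be + 2 by have := addr_gt0 al0 be0; lra.
near=> N.
have N0 : (0 < N)%N by near: N; exists 1%N.
have [n10 n1_ge _] := ceiln_bounds al0 N0; have [n20 n2_ge _] := ceiln_bounds be0 N0.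
have := sprob_le dP dQ n10 n20 n1_ge n2_ge (fun x y h => le_trans ct (tE N N0 x y h)).
move=> /(expo_ge (sprob_ge0 dP dQ _)); rewrite ler1n muln_gt0 !expn_gt0 => /(_ isT N0).
apply: le_trans; rewrite lee_fin lerB //.
have Np : 0 < N%:R :> R by rewrite ltr0n.
have K0 : 0 <= K%:R :> R by [].
have := ln_card_types_le N0; rewrite -/K.
have : ln ((al + be + 2) * N%:R) / N%:R <= e / (K%:R + 1).
  by near: N; exact: ln_div_near g1 (divr_gt0 e0 K1).
rewrite ler_pdivrMr // ler_pdivrMr //.
set f := e / (K%:R + 1); have fK : f * (K%:R + 1) = e by rewrite divfK ?gt_eqF.
have f0 : 0 <= f by rewrite divr_ge0 ?ltW.
move=> hL hC; nra.
Unshelve. all: by end_near. Qed.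

End ErrorExponent.

Section Matches.
Variables M1 M2 : nat.
Implicit Types m : {set 'I_M1 * 'I_M2}.

Lemma sub_match m m' : is_match m -> m' \subset m -> is_match m'.
Proof.
move=> /forallP hm /fintype.subsetP sub; apply/forallP => p; apply/implyP => pm'.
apply/forallP => q; apply/implyP => qm'.
by move: (hm p) => /implyP/(_ (sub p pm'))/forallP/(_ q)/implyP/(_ (sub q qm')).
Qed.

Lemma match_fst_inj m : is_match m -> {in m &, injective (fun p => p.1)}.
Proof.
move=> /forallP hm p q pm qm e.
by move: (hm p) => /implyP/(_ pm)/forallP/(_ q)/implyP/(_ qm); rewrite e eqxx => /eqP.
Qed.

Lemma match_snd_inj m : is_match m -> {in m &, injective (fun p => p.2)}.
Proof.
move=> /forallP hm p q pm qm e.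
by move: (hm p) => /implyP/(_ pm)/forallP/(_ q)/implyP/(_ qm); rewrite e eqxx orbT => /eqP.
Qed.

End Matches.

Lemma sume_inj_le (R : realType) (T U : finType) (A : {set T}) (f : T -> U)
    (g : U -> \bar R) :
  {in A &, injective f} -> (forall u, (0 <= g u)%E) ->
  (\sum_(p in A) g (f p) <= \sum_u g u)%E.
Proof.
move=> finj g0; rewrite -(big_imset _ finj) /= big_mkcond /=.
by apply: lee_sum => u _; case: ifP.
Qed.

(* If [m' \subset m0], swap one element of [m'] for one of [m0 :\: m'];
   otherwise take any [#|m'|] elements of [m0]. *)
Lemma exists_other_subset (T : finType) (m' m0 : {set T}) :
  m' != m0 -> (0 < #|m'|)%N -> (#|m'| <= #|m0|)%N ->
  exists m : {set T}, [/\ m \subset m0, #|m| = #|m'| & m != m'].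
Proof.
move=> ne c0 cle; have [sub|nsub] := boolP (m' \subset m0).
  have /fintype.properP[_ [p pm0 pm']] : m' \proper m0 by rewrite finset.properEneq ne.
  have [q qm'] := card_gt0P c0.
  exists (p |: (m' :\ q)); split.
  - by rewrite finset.subUset finset.sub1set pm0 (fintype.subset_trans (finset.subD1set _ _) sub).
  - by rewrite cardsU1 !inE (negbTE pm') andbF (cardsD1 q m') qm'.
  - by apply: contraNneq pm' => <-; rewrite !inE eqxx.
pose s := take #|m'| (enum m0).
have s_m0 : [set x in s] \subset m0.
  by apply/fintype.subsetP => x; rewrite inE => /mem_take; rewrite mem_enum.
exists [set x in s]; split => //.
- by rewrite cardsE (card_uniqP (take_uniq _ (enum_uniq _))) size_takel // -cardE.
- by apply: contraNneq nsub => <-.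
Qed.

Section Exponents.
Variables (R : realType) (X : finType) (M1 M2 : nat) (al be : R).
Variables (P : 'I_M1 -> {ffun X -> R}) (Q : 'I_M2 -> {ffun X -> R}).
Hypotheses (al0 : 0 < al) (be0 : 0 < be).
Hypotheses (dP : forall i, is_dist (P i)) (dQ : forall j, is_dist (Q j)).
Implicit Types (m : {set 'I_M1 * 'I_M2}) (Om : 'I_M1 -> {ffun X -> R})
  (Ps : 'I_M2 -> {ffun X -> R}).

Lemma Er_le_Eexp l m Om Ps : in_calM m ->
  (forall i, is_dist (Om i)) -> (forall j, is_dist (Ps j)) ->
  (Gm m Om Ps al be <= l%:E)%E -> (Er al be l P Q <= Eexp P Q Om Ps al be)%E.
Proof. by move=> *; apply: ereal_inf_lbound; exists m, Om, Ps. Qed.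

Lemma Gfun_le_Eexp l K m Om Ps : in_calM m -> (K < #|m|)%N ->
  (forall i, is_dist (Om i)) -> (forall j, is_dist (Ps j)) ->
  (Gm m Om Ps al be <= l%:E)%E -> (Gfun al be l K P Q <= Eexp P Q Om Ps al be)%E.
Proof. by move=> cm Km *; apply: ereal_inf_lbound; exists m, Om, Ps; rewrite cm Km. Qed.

Lemma Ffun_le_Eexp l m1 m2 Om Ps : is_match m1 -> is_match m2 -> #|m1| = #|m2| -> m1 != m2 ->
  (forall i, is_dist (Om i)) -> (forall j, is_dist (Ps j)) ->
  (Gm m1 Om Ps al be <= l%:E)%E -> (Gm m2 Om Ps al be <= l%:E)%E ->
  (Ffun al be l #|m1| P Q <= Eexp P Q Om Ps al be)%E.
Proof.
move=> hm1 hm2 c12 ne12 *; apply: ereal_inf_lbound; exists m1, m2, Om, Ps.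
by rewrite hm1 hm2 c12 !eqxx ne12.
Qed.

(* On a sub-match of the true match, P_i = Q_j, so each GJS term is bounded by
   the divergences of Om_i and Ps_j from that common distribution. *)
Lemma Gm_le_Eexp m0 m Om Ps : in_Pm m0 P Q -> is_match m0 -> m \subset m0 ->
  (forall i, is_dist (Om i)) -> (forall j, is_dist (Ps j)) ->
  (Gm m Om Ps al be <= Eexp P Q Om Ps al be)%E.
Proof.
move=> hPQ hm0 sub dO dS; have hm := sub_match hm0 sub.
have KL0 c T U : 0 < c -> is_dist T -> is_dist U -> (0 <= c%:E * KL T U)%E.
  by move=> c0 dT dU; rewrite mule_ge0 ?KL_ge0 // lee_fin ltW.
apply: (@le_trans _ _ (\sum_(p in m) (al%:E * KL (Om p.1) (P p.1) +
                                      be%:E * KL (Ps p.2) (Q p.2)))%E).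
  apply: lee_sum => p pm; have /hPQ PQ : (p.1, p.2) \in m0.
    by rewrite -surjective_pairing (fintype.subsetP sub).
  by rewrite /= -PQ; apply: GJS_le_KL.
rewrite big_split /=; apply: leeD.
  apply: (sume_inj_le (g := fun i => al%:E * KL (Om i) (P i))%E (match_fst_inj hm)).
  by move=> i; apply: KL0.
apply: (sume_inj_le (g := fun j => be%:E * KL (Ps j) (Q j))%E (match_snd_inj hm)).
by move=> j; apply: KL0.
Qed.

Section TestEvents.
Variables (n1 n2 : nat) (l1 l2 : R).
Hypotheses (n1_gt0 : (0 < n1)%N) (n2_gt0 : (0 < n2)%N).
Variables (x : sampleX X M1 n1) (y : sampleY X M2 n2).

Local Notation Eemp := (Eexp P Q (etypes R x) (etypes R y) al be).

Let dO i : is_dist (etypes R x i). Proof. exact: etype_dist. Qed.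
Let dS j : is_dist (etypes R y j). Proof. exact: etype_dist. Qed.

Lemma false_alarm_exponent m : in_calM m -> decides al be l1 l2 m x y ->
  (Er al be l1 P Q <= Eemp)%E.
Proof. by move=> cm [[S _] _]; exact: Er_le_Eexp cm dO dS S. Qed.

Variable m0 : {set 'I_M1 * 'I_M2}.
Hypotheses (cm0 : in_calM m0) (hPQ : in_Pm m0 P Q).

Let Gm_le_Eemp m : m \subset m0 -> (Gm m (etypes R x) (etypes R y) al be <= Eemp)%E.
Proof. by move=> sub; apply: Gm_le_Eexp hPQ _ sub dO dS; case/andP: cm0. Qed.

(* A match no larger than m0 is only accepted if some other sub-match of m0 of
   its size has statistic above l2. *)
Lemma Bev_other_exponent m : in_calM m -> m <> m0 -> Bev al be l1 l2 m x y ->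
  (Order.min (Gfun al be l1 #|m0| P Q) l2%:E <= Eemp)%E.
Proof.
move=> cm ne [S Bo]; have /andP[hm m_gt0] := cm; have /andP[hm0 _] := cm0.
have [lt_m0m|le_mm0] := ltnP #|m0| #|m|.
  by rewrite ge_min (Gfun_le_Eexp cm lt_m0m dO dS S).
have [m' [sub c' ne']] := exists_other_subset (introN eqP ne) m_gt0 le_mm0.
have /ltW := Bo m' (sub_match hm0 sub) c' (elimN eqP ne').
by rewrite ge_min => /le_trans->; rewrite ?orbT ?Gm_le_Eemp.
Qed.

Lemma false_reject_exponent : ~ (exists m, in_calM m /\ decides al be l1 l2 m x y) ->
  (Order.min (Order.min l1%:E l2%:E)
     (Order.min (Gfun al be l1 #|m0| P Q) (Ffun al be l2 #|m0| P Q)) <= Eemp)%E.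
Proof.
move=> nodec; have /andP[hm0 _] := cm0; rewrite !ge_min.
have [Bm0|nBm0] := pselect (Bev al be l1 l2 m0 x y).
  have [m [cm ne Bm]] : exists m, [/\ in_calM m, m <> m0 & Bev al be l1 l2 m x y].
    apply: contra_notP nodec => nex; exists m0; split=> //; split=> // m cm ne Bm.
    by apply: nex; exists m.
  by have := Bev_other_exponent cm ne Bm; rewrite ge_min => /orP[] ->; rewrite ?orbT.
have Sm0 := Gm_le_Eemp (subxx m0).
have [S1|/ltW l1S] := leP (Sstat al be m0 x y) l1%:E; last by rewrite (le_trans l1S Sm0).
have [S2|/ltW l2S] := leP (Sstat al be m0 x y) l2%:E; last by rewrite (le_trans l2S Sm0) orbT.
have [m [hm c ne S]] : exists m,
    [/\ is_match m, #|m| = #|m0|, m <> m0 & (Sstat al be m x y <= l2%:E)%E].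
  apply: contra_notP nBm0 => nex; split=> // m hm c ne; rewrite ltNge; apply/negP => S.
  by apply: nex; exists m.
by rewrite (Ffun_le_Eexp hm0 hm (esym c) _ dO dS S2 S) ?orbT //; apply/eqP => e; apply: ne.
Qed.

End TestEvents.

End Exponents.

Theorem theorem5 (R : realType) (X : finType) (M1 M2 : nat)
  (alpha beta l1 l2 : R) :
  (1 <= M2)%N -> (M2 <= M1)%N ->
  0 < alpha -> 0 < beta -> 0 < l1 -> 0 < l2 ->
  (* (i) false alarm under the null hypothesis *)
  (forall (P : 'I_M1 -> {ffun X -> R}) (Q : 'I_M2 -> {ffun X -> R}),
     valid_model P Q -> in_P0 P Q ->
     (Er alpha beta l1 P Q <=
        limn_einf (fun N => expo (eta_err alpha beta l1 l2 P Q N) N))%E) /\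
  (* (ii) mismatch and false reject under H_l^K (m0 is the K-match M_l^K) *)
  (forall (m0 : {set 'I_M1 * 'I_M2})
          (P : 'I_M1 -> {ffun X -> R}) (Q : 'I_M2 -> {ffun X -> R}),
     in_calM m0 -> valid_model P Q -> in_Pm m0 P Q ->
     (Order.min (Gfun alpha beta l1 #|m0| P Q) l2%:E <=
        limn_einf (fun N => expo (beta_err alpha beta l1 l2 m0 P Q N) N))%E /\
     (Order.min (Order.min l1%:E l2%:E)
        (Order.min (Gfun alpha beta l1 #|m0| P Q) (Ffun alpha beta l2 #|m0| P Q)) <=
        limn_einf (fun N => expo (zeta_err alpha beta l1 l2 P Q N) N))%E).
Proof.
move=> _ _ al0 be0 _ _; split.
  move=> P Q [dP dQ _ _] _; apply: sprob_exponent_ge => // N N0 x y [m [cm dec]].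
  have [[n10 _ _] [n20 _ _]] := (ceiln_bounds al0 N0, ceiln_bounds be0 N0).
  exact (false_alarm_exponent P Q n10 n20 cm dec).
move=> m0 P Q cm0 [dP dQ _ _] hPQ; split; apply: sprob_exponent_ge => // N N0 x y;
  have [[n10 _ _] [n20 _ _]] := (ceiln_bounds al0 N0, ceiln_bounds be0 N0).
  by case=> m [cm ne [Bm _]]; exact (Bev_other_exponent al0 be0 dP dQ n10 n20 cm0 hPQ cm ne Bm).
exact (false_reject_exponent al0 be0 dP dQ n10 n20 cm0 hPQ).
Qed.
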